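(* For every positive integer $m$ and every distribution $\mathcal D$ on $[0,1]\times\{0,1\}$, $\mathsf{SCDL}_{2m}(\mathcal D)\ge\mathsf{SCDL}_m(\mathcal D)$.
   Context: For $x\in\mathbb R$ write $x_+=\max\{x,0\}$. For a distribution $\mathcal D$ of $(p,y)\in[0,1]\times\{0,1\}$, a positive integer $m$ and $i\in\{0,\ldots,m\}$, let $w_i(p)=(1-|mp-i|)_+$, $\pi_i=\mathbb E_{\mathcal D}[w_i(p)]$ and $q_i=\mathbb E_{\mathcal D}[w_i(p)y]/\pi_i$ (terms with $\pi_i=0$ are $0$). Define $$\mathsf{SCDL}_m(\mathcal D)=\max_{i=0,\ldots,m}\Big(\sum_{j=0}^{i}\pi_j\big(q_j-\tfrac{i+1}{m}\big)_+ +\sum_{j=i+1}^{m}\pi_j\big(\tfrac im-q_j\big)_+\Big).$$ *)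

From HB Require Import structures.
From mathcomp Require Import all_boot all_order all_algebra.
From mathcomp Require Import all_classical all_reals all_analysis.
Set Implicit Arguments. Unset Strict Implicit. Unset Printing Implicit Defensive.
Import Order.TTheory GRing.Theory Num.Theory.
Local Open Scope ring_scope.

(* The joint distribution D of (p, y) is represented as the law of a pair of
   real random variables (p, y) on a probability space (T, P), with
   p in [0,1] and y in {0,1}. *)

Section SCDL.
Context {R : realType} {d : measure_display} {T : measurableType d}.

Definition pos (x : R) : R := Num.max x 0.

Definition wfun (m i : nat) (x : R) : R := pos (1 - `|m%:R * x - i%:R|).

Definition piw (P : probability T R) (p : T -> R) (m i : nat) : R :=
  Rintegral P setT (fun t => wfun m i (p t)).

Definition qw (P : probability T R) (p y : T -> R) (m i : nat) : R :=
  if piw P p m i == 0 then 0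
  else Rintegral P setT (fun t => wfun m i (p t) * y t) / piw P p m i.

Definition SCDL_term (P : probability T R) (p y : T -> R) (m i : nat) : R :=
  \sum_(j < m.+1 | (j <= i)%N)
      piw P p m j * pos (qw P p y m j - i.+1%:R / m%:R)
  + \sum_(j < m.+1 | (i < j)%N)
      piw P p m j * pos (i%:R / m%:R - qw P p y m j).

(* SCDL_m(D) = max_{i = 0..m} SCDL_term i.  All terms are >= 0, so using 0
   as the neutral element of the (nonempty) max is harmless. *)
Definition SCDL (P : probability T R) (p y : T -> R) (m : nat) : R :=
  \big[Num.max/0]_(i < m.+1) SCDL_term P p y m i.

End SCDL.

(* Write c^n_j(t) = E[w_j(p) y] - t pi_j, so that pi_j (q_j - t)_+ = (c^n_j(t))_+ and
   pi_j (t - q_j)_+ = (-c^n_j(t))_+.  The two-scale relation of the hat function gives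
   w^m_j = w^2m_2j + (w^2m_(2j+1) + w^2m_(2j-1)) / 2 on [0, 1], and c is linear in w, so
   c^m_j splits in the same way.  By subadditivity of x |-> x_+, and since c^n_j(t) is
   nonincreasing in t, the i-th term of SCDL_m is then at most the average of lower
   bounds for the terms 2i and 2i+1 of SCDL_2m. *)

From HB Require Import structures.
From mathcomp Require Import all_boot all_order all_algebra.
From mathcomp Require Import all_classical all_reals all_analysis.
From mathcomp Require Import measurable_realfun zify ring lra.
Import Order.TTheory GRing.Theory Num.Theory.
Local Open Scope ring_scope.

Section NatDiv.
Context {R : numFieldType}.

Lemma natr_div_double (a n : nat) : (2 * a)%:R / (2 * n)%:R = a%:R / n%:R :> R.
Proof. by rewrite !natrM -mulf_div divff ?mul1r // pnatr_eq0. Qed.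

Lemma ler_natr_div (a b n : nat) : (a <= b)%N -> a%:R / n%:R <= b%:R / n%:R :> R.
Proof. by move=> le_ab; rewrite ler_wpM2r ?invr_ge0 ?ler0n ?ler_nat. Qed.

End NatDiv.

Section Subdivision.
Context {R : realFieldType}.
Implicit Types (f : nat -> R) (i j n : nat).

(* For [j = 0] the index [(2 * j).-1] truncates to [0], but its weight vanishes. *)
Definition subdiv f j : R :=
  f (2 * j)%N + 2^-1 * (f (2 * j).+1 + (0 < j)%:R * f (2 * j).-1).

Lemma subdivN f j : subdiv (fun l => - f l) j = - subdiv f j.
Proof. by rewrite /subdiv; ring. Qed.

Lemma sum_subdiv_prefix f i :
  \sum_(0 <= j < i.+1) subdiv f j =
  \sum_(0 <= l < (2 * i).+1) f l + 2^-1 * f (2 * i).+1.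
Proof.
elim: i => [|i IH]; first by rewrite !big_nat1 /subdiv /= mul0r addr0.
have -> : (2 * i.+1).+1 = (2 * i).+3 by lia.
rewrite big_nat_recr //= IH !big_nat_recr //= /subdiv.
have -> : (2 * i.+1 = (2 * i).+2)%N by lia.
by rewrite /= mul1r; lra.
Qed.

Lemma sum_subdiv_range f i n : (i <= n)%N ->
  \sum_(i.+1 <= j < n.+1) subdiv f j =
  \sum_((2 * i).+1 <= l < (2 * n).+1) f l + 2^-1 * (f (2 * n).+1 - f (2 * i).+1).
Proof.
move=> le_in; have := sum_subdiv_prefix f n.
rewrite (big_cat_nat (n := i.+1)) //= sum_subdiv_prefix.
rewrite (big_cat_nat (n := (2 * i).+1) (p := (2 * n).+1)) //=; [lra | lia].
Qed.

End Subdivision.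

Section PositivePart.
Context {R : realType}.
Implicit Types (a x u : R).

Lemma pos_ge0 x : 0 <= pos x.
Proof. by rewrite /pos le_max lexx orbT. Qed.

Lemma pos_id x : 0 <= x -> pos x = x.
Proof. by move=> x_ge0; rewrite /pos max_l. Qed.

Lemma pos_eq0 x : x <= 0 -> pos x = 0.
Proof. by move=> x_le0; rewrite /pos max_r. Qed.

Lemma le_pos x u : x <= u -> pos x <= pos u.
Proof. by move=> le_xu; rewrite /pos le_max2. Qed.

Lemma posZ a x : 0 <= a -> pos (a * x) = a * pos x.
Proof. by move=> a_ge0; rewrite /pos maxr_pMr // mulr0. Qed.

Lemma posD_le x u : pos (x + u) <= pos x + pos u.
Proof.
rewrite /pos ge_max addr_ge0 ?pos_ge0 // andbT.
by rewrite lerD // le_max lexx.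
Qed.

Lemma pos_subdiv_le (f : nat -> R) j : pos (subdiv f j) <= subdiv (fun l => pos (f l)) j.
Proof.
rewrite /subdiv; apply: le_trans (posD_le _ _) _; rewrite lerD2l.
rewrite posZ ?invr_ge0 ?ler0n // ler_wpM2l ?invr_ge0 ?ler0n //.
apply: le_trans (posD_le _ _) _; rewrite lerD2l posZ ?ler0n //.
Qed.

Ltac split_pos_abs := repeat match goal with
  | |- context [`|?a|] => let H := fresh in case: (lerP 0 a) => H;
      [rewrite (ger0_norm H) | rewrite (ltr0_norm H)]; try (exfalso; lra)
  | |- context [pos ?a] => let H := fresh in case: (lerP 0 a) => H;
      [rewrite (pos_id _ H) | rewrite (pos_eq0 _ (ltW H))]; try (exfalso; lra)
  end.

Lemma hat_two_scale u :
  pos (1 - `|u|) =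
  pos (1 - `|2 * u|) + 2^-1 * (pos (1 - `|2 * u - 1|) + pos (1 - `|2 * u + 1|)).
Proof. by split_pos_abs; lra. Qed.

End PositivePart.

Section Hat.
Context {R : realType}.
Implicit Types (x : R) (n l j : nat).

Lemma wfun_ge0 n l x : 0 <= wfun n l x.
Proof. exact: pos_ge0. Qed.

Lemma wfun_le1 n l x : wfun n l x <= 1.
Proof. by rewrite /wfun /pos ge_max ler01 gerBl normr_ge0. Qed.

Lemma wfun_eq0 n l x : x <= 1 -> (n < l)%N -> wfun n l x = 0.
Proof.
move=> x_le1 lt_nl; rewrite /wfun pos_eq0 // subr_le0.
have nx_le : n%:R * x <= n%:R by rewrite ler_piMr ?ler0n.
have : (n.+1%:R <= l%:R :> R) by rewrite ler_nat.
rewrite -natr1 => le_l; rewrite ler_normr; apply/orP; right; lra.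
Qed.

Lemma wfun_subdiv m j x : 0 <= x -> wfun m j x = subdiv (fun l => wfun (2 * m) l x) j.
Proof.
move=> x_ge0; rewrite /wfun /subdiv hat_two_scale; set u := m%:R * x - j%:R.
have -> : (2 * m)%:R * x - (2 * j)%:R = 2 * u by rewrite /u !natrM; ring.
have -> : (2 * m)%:R * x - (2 * j).+1%:R = 2 * u - 1.
  by rewrite /u -addn1 natrD !natrM; ring.
case: j @u => [|k] u /=.
  have u_ge0 : 0 <= u by rewrite /u subr0 mulr_ge0.
  by rewrite mul0r addr0 (pos_eq0 (1 - `|2 * u + 1|)) ?addr0 // subr_le0 ger0_norm; lra.
have -> : (2 * m)%:R * x - (2 * k.+1).-1%:R = 2 * u + 1.
  rewrite /u (_ : (2 * k.+1).-1 = 2 * k + 1)%N; last by lia.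
  by rewrite natrD !natrM; ring.
by rewrite mul1r.
Qed.

End Hat.

Section Refinement.
Context {R : realType}.

Definition gap_term (c : nat -> R -> R) (n i : nat) : R :=
  \sum_(0 <= j < i.+1) pos (c j (i.+1%:R / n%:R))
  + \sum_(i.+1 <= j < n.+1) pos (- c j (i%:R / n%:R)).

Lemma gap_term_ge0 c n i : 0 <= gap_term c n i.
Proof. by rewrite addr_ge0 // sumr_ge0 // => j _; exact: pos_ge0. Qed.

Variables (m : nat) (c C : nat -> R -> R).
Hypothesis C_subdiv : forall j t, C j t = subdiv (c ^~ t) j.
Hypothesis c_antitone : forall l s t, s <= t -> c l t <= c l s.
Hypothesis c_last : forall t, c (2 * m).+1 t = 0.

Section Bin.
Variables (i : nat) (le_im : (i <= m)%N).

Let t1 : R := i.+1%:R / m%:R.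
Let t2 : R := i%:R / m%:R.
Let G l := pos (c l t1).
Let H l := pos (- c l t2).
Let E := \sum_(0 <= l < (2 * i).+1) G l + \sum_((2 * i).+1 <= l < (2 * m).+1) H l.
Let delta := G (2 * i).+1 - H (2 * i).+1.

Lemma gap_term_coarse_le : gap_term C m i <= E + 2^-1 * delta.
Proof.
have H_last : H (2 * m).+1 = 0 by rewrite /H c_last oppr0 pos_eq0.
have split_le : gap_term C m i <=
    \sum_(0 <= j < i.+1) subdiv G j + \sum_(i.+1 <= j < m.+1) subdiv H j.
  apply: lerD; apply: ler_sum => j _; rewrite C_subdiv.
    exact: pos_subdiv_le.
  by rewrite -subdivN; exact: pos_subdiv_le.
apply: le_trans split_le _.
by rewrite sum_subdiv_prefix sum_subdiv_range // H_last /E /delta; lra.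
Qed.

Lemma gap_term_fine_even_ge : E <= gap_term c (2 * m) (2 * i).
Proof.
rewrite /gap_term /E natr_div_double; apply: lerD (lexx _).
apply: ler_sum => l _; apply/le_pos/c_antitone.
by rewrite /t1 -(natr_div_double i.+1); apply: ler_natr_div; lia.
Qed.

Lemma gap_term_fine_odd_ge : (i < m)%N -> E + delta <= gap_term c (2 * m) (2 * i).+1.
Proof.
move=> lt_im; rewrite /gap_term /E /delta /G /H.
have -> : (2 * i).+2%:R / (2 * m)%:R = t1.
  by rewrite /t1 -(natr_div_double i.+1); congr (_%:R / _); lia.
rewrite (big_nat_recr (2 * i).+1) //= (big_ltn (m := (2 * i).+1)) /=; last by lia.
have H_le : \sum_((2 * i).+2 <= l < (2 * m).+1) pos (- c l t2) <=
    \sum_((2 * i).+2 <= l < (2 * m).+1) pos (- c l ((2 * i).+1%:R / (2 * m)%:R)).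
  apply: ler_sum => l _; apply: le_pos; rewrite lerN2; apply: c_antitone.
  by rewrite /t2 -(natr_div_double i); apply: ler_natr_div; lia.
lra.
Qed.

Lemma gap_term_refine :
  gap_term C m i <= \big[Num.max/0]_(k < (2 * m).+1) gap_term c (2 * m) k.
Proof.
have fine_le k : (k < (2 * m).+1)%N ->
    gap_term c (2 * m) k <= \big[Num.max/0]_(k < (2 * m).+1) gap_term c (2 * m) k.
  by move=> lt_k; exact: (le_bigmax _ _ (Ordinal lt_k)).
have coarse := gap_term_coarse_le.
have [delta_le0 | delta_gt0] := lerP delta 0.
  apply: le_trans (fine_le (2 * i)%N _); last by lia.
  by apply: le_trans coarse _; apply: le_trans gap_term_fine_even_ge; lra.
have lt_im : (i < m)%N.
  rewrite ltn_neqAle le_im andbT; apply/eqP => eq_im; move: delta_gt0.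
  by rewrite /delta /G eq_im c_last pos_eq0 // sub0r oppr_gt0 ltNge pos_ge0.
apply: le_trans (fine_le (2 * i).+1 _); last by lia.
by apply: le_trans coarse _; apply: le_trans (gap_term_fine_odd_ge lt_im); lra.
Qed.

End Bin.

Lemma bigmax_gap_term_subdiv_le :
  \big[Num.max/0]_(i < m.+1) gap_term C m i <=
  \big[Num.max/0]_(k < (2 * m).+1) gap_term c (2 * m) k.
Proof.
apply: bigmax_le => [|[i lt_im] _]; last by apply: gap_term_refine; rewrite -ltnS.
exact: le_trans (gap_term_ge0 _ _ 0) (le_bigmax _ _ ord0).
Qed.

End Refinement.

Section Integrability.
Context {R : realType} {d : measure_display} {T : measurableType d}.
Variable P : probability T R.
Implicit Types f g : T -> R.

Lemma integrable_bounded f M :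
  measurable_fun setT f -> (forall t, `|f t| <= M) -> P.-integrable setT (EFin \o f).
Proof.
move=> mf f_le; apply: measurable_bounded_integrable => //.
  by apply: le_lt_trans (probability_le1 P _) _ => //; rewrite ltry.
exists M; split; first exact: num_real.
by move=> M' lt_MM' t _; apply: le_trans (f_le t) (ltW lt_MM').
Qed.

Lemma integrableD_EFin f g :
  P.-integrable setT (EFin \o f) -> P.-integrable setT (EFin \o g) ->
  P.-integrable setT (EFin \o (fun t => f t + g t)).
Proof.
by move=> intf intg; apply: eq_integrable (integrableD measurableT intf intg).
Qed.

Lemma integrableZl_EFin a f :
  P.-integrable setT (EFin \o f) -> P.-integrable setT (EFin \o (fun t => a * f t)).
Proof.
by move=> intf; apply: eq_integrable (integrableZl measurableT a intf).
Qed.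

Lemma Rintegral_subdiv (f : nat -> T -> R) j :
  (forall l, P.-integrable setT (EFin \o f l)) ->
  \int[P]_(t in setT) subdiv (f ^~ t) j = subdiv (fun l => \int[P]_(t in setT) f l t) j.
Proof.
move=> intf; have intZ a l : P.-integrable setT (EFin \o (fun t => a * f l t)).
  exact: integrableZl_EFin.
rewrite /subdiv RintegralD ?RintegralZl ?RintegralD ?RintegralZl //.
  exact: integrableD_EFin.
by apply: integrableZl_EFin; exact: integrableD_EFin.
Qed.

End Integrability.

Section BinGap.
Context {R : realType} {d : measure_display} {T : measurableType d}.
Variables (P : probability T R) (p y : T -> R).
Hypotheses (mp : measurable_fun setT p) (my : measurable_fun setT y).
Hypotheses (p01 : forall t, 0 <= p t <= 1) (y01 : forall t, y t = 0 \/ y t = 1).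

Definition piwy (n l : nat) : R := \int[P]_(t in setT) (wfun n l (p t) * y t).

Definition bin_gap (n l : nat) (s : R) : R := piwy n l - s * piw P p n l.

Lemma measurable_wfun n l : measurable_fun setT (fun t => wfun n l (p t)).
Proof.
apply: measurable_maxr (measurable_cst _).
apply: measurable_funB (measurable_cst _) _.
apply: measurableT_comp => //.
apply: measurable_funB (measurable_cst _).
exact: measurable_funM (measurable_cst _) mp.
Qed.

Lemma wfun_mul_y_bounds n l t : 0 <= wfun n l (p t) * y t <= wfun n l (p t).
Proof. by case: (y01 t) => ->; rewrite ?mulr0 ?mulr1 lexx ?wfun_ge0. Qed.

Lemma integrable_wfun n l : P.-integrable setT (EFin \o (fun t => wfun n l (p t))).
Proof.
apply: (integrable_bounded _ _ 1); first exact: measurable_wfun.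
by move=> t; rewrite ger0_norm ?wfun_ge0 ?wfun_le1.
Qed.

Lemma integrable_wfun_y n l :
  P.-integrable setT (EFin \o (fun t => wfun n l (p t) * y t)).
Proof.
apply: (integrable_bounded _ _ 1).
  exact: measurable_funM (measurable_wfun n l) my.
move=> t; have /andP[wy_ge0 wy_le] := wfun_mul_y_bounds n l t.
by rewrite ger0_norm // (le_trans wy_le) ?wfun_le1.
Qed.

Lemma piw_ge0 n l : 0 <= piw P p n l.
Proof. by apply: Rintegral_ge0 => t _; exact: wfun_ge0. Qed.

Lemma piwy_bounds n l : 0 <= piwy n l <= piw P p n l.
Proof.
apply/andP; split.
  by apply: Rintegral_ge0 => t _; case/andP: (wfun_mul_y_bounds n l t).
apply: le_Rintegral => //; [exact: integrable_wfun_y | exact: integrable_wfun |].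
by move=> t _; case/andP: (wfun_mul_y_bounds n l t).
Qed.

Lemma piw_qw n l : piw P p n l * qw P p y n l = piwy n l.
Proof.
rewrite /qw; case: eqP => [pi0 | /eqP pi_neq0]; last by rewrite mulrC divfK.
have := piwy_bounds n l; rewrite pi0 mulr0 => /andP[piwy_ge0 piwy_le0].
by apply/eqP; rewrite eq_le piwy_le0 piwy_ge0.
Qed.

Lemma piw_pos_qwB n l s : piw P p n l * pos (qw P p y n l - s) = pos (bin_gap n l s).
Proof. by rewrite -posZ ?piw_ge0 // mulrBr piw_qw mulrC. Qed.

Lemma piw_pos_subqw n l s : piw P p n l * pos (s - qw P p y n l) = pos (- bin_gap n l s).
Proof. by rewrite -posZ ?piw_ge0 // mulrBr piw_qw opprB mulrC. Qed.

Lemma SCDL_gap_term n :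
  SCDL P p y n = \big[Num.max/0]_(i < n.+1) gap_term (bin_gap n) n i.
Proof.
apply: eq_bigr => -[i lt_in] _; rewrite /SCDL_term /gap_term /=.
rewrite (big_nat_widen 0 i.+1 n.+1) // big_mkord big_geq_mkord.
congr (_ + _); apply: eq_big => j //=; rewrite ?ltnS // => _.
  exact: piw_pos_qwB.
exact: piw_pos_subqw.
Qed.

Lemma bin_gap_subdiv m j s :
  bin_gap m j s = subdiv (fun l => bin_gap (2 * m) l s) j.
Proof.
have w_subdiv t : wfun m j (p t) = subdiv (fun l => wfun (2 * m) l (p t)) j.
  by apply: wfun_subdiv; case/andP: (p01 t).
have piw_subdiv : piw P p m j = subdiv (piw P p (2 * m)) j.
  rewrite /piw -Rintegral_subdiv; last by move=> l; exact: integrable_wfun.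
  by apply: eq_Rintegral => t _; exact: w_subdiv.
have piwy_subdiv : piwy m j = subdiv (piwy (2 * m)) j.
  rewrite /piwy -Rintegral_subdiv; last by move=> l; exact: integrable_wfun_y.
  by apply: eq_Rintegral => t _; rewrite w_subdiv /subdiv; ring.
by rewrite /bin_gap piw_subdiv piwy_subdiv /subdiv; ring.
Qed.

Lemma bin_gap_antitone n l s s' : s <= s' -> bin_gap n l s' <= bin_gap n l s.
Proof. by move=> le_ss'; rewrite lerD2l lerN2 ler_wpM2r ?piw_ge0. Qed.

Lemma bin_gap_eq0 n l s : (n < l)%N -> bin_gap n l s = 0.
Proof.
move=> lt_nl; have w0 t : wfun n l (p t) = 0 by rewrite wfun_eq0 //; case/andP: (p01 t).
have Rintegral0 (f : T -> R) : f =1 (fun=> 0) -> \int[P]_(t in setT) f t = 0.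
  by move=> f0; rewrite (eq_Rintegral P (g := fun=> 0)) ?Rintegral_cst ?mul0r.
rewrite /bin_gap /piwy /piw !Rintegral0 => [|t|t]; rewrite ?w0 ?mul0r //.
by rewrite mulr0 subr0.
Qed.

End BinGap.

Theorem lemma3p3 (R : realType) (d : measure_display) (T : measurableType d)
  (P : probability T R) (p y : {RV P >-> R})
  (hp : forall t, 0 <= p t <= 1) (hy : forall t, y t = 0 \/ y t = 1)
  (m : nat) (hm : (0 < m)%N) :
  SCDL P p y m <= SCDL P p y (2 * m)%N.
Proof.
have mp : measurable_fun setT p := measurable_funPT p.
have my : measurable_fun setT y := measurable_funPT y.
rewrite !SCDL_gap_term //; apply: bigmax_gap_term_subdiv_le.
- exact: bin_gap_subdiv.
- exact: bin_gap_antitone.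
- by move=> s; apply: bin_gap_eq0.
Qed.
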